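(* For every $h>0$, the function $v(\cdot,h)$ satisfies $v_{yy}(y,h)>0$ in each of the three regions $y\ge e^{\lambda\beta h}$, $e^{(\lambda-1)\beta h}<y<e^{\lambda\beta h}$ and $(1-\lambda)e^{(\lambda-1)\beta h}\le y\le e^{(\lambda-1)\beta h}$ (using the corresponding piece of the formula). In particular the inverse Legendre transform $\inf_{y\ge(1-\lambda)e^{(\lambda-1)\beta h}}[v(y,h)+xy]$ is well defined, and the function $\pi^\dagger(y,h)$ is strictly positive for all $h>0$ and $y\ge(1-\lambda)e^{(\lambda-1)\beta h}$.
   Context: Constants: $r>0$, $\mu>r$, $\sigma>0$, $\beta>0$, $\lambda\in(0,1)$, $\kappa:=(\mu-r)/\sigma>0$, $r_{1,2}=\frac12(1\pm\sqrt{1+8r/\kappa^2})$ (so $r_1>1>0>r_2$ and $r_1(r_1-1)=r_2(r_2-1)=2r/\kappa^2$). For $h\ge0$: $C_6(h):=\frac{(1-\lambda)^{r_1-r_2}}{(r_1-r_2)\beta r}\Big[\frac{1}{1-r_2}e^{(\lambda-1)(1-r_2)\beta h}-\frac{\lambda}{\lambda(1-r_2)-(r_1-r_2)}e^{[\lambda(1-r_2)-(r_1-r_2)]\beta h}\Big]$, $C_4(h):=C_6(h)+\frac{(1-r_1)\kappa^2}{2(r_1-r_2)\beta r^2}e^{(\lambda-1)(1-r_2)\beta h}$, $C_2(h):=C_6(h)+\frac{(1-r_1)\kappa^2}{2(r_1-r_2)\beta r^2}\big[e^{(\lambda-1)(1-r_2)\beta h}-e^{\lambda(1-r_2)\beta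 h}\big]$, $C_3(h):=\frac{(r_2-1)\kappa^2}{2(r_1-r_2)\beta r^2}e^{\lambda(1-r_1)\beta h}$, $C_5(h):=\frac{(1-r_2)\kappa^2}{2(r_1-r_2)\beta r^2}\big[e^{(\lambda-1)(1-r_1)\beta h}-e^{\lambda(1-r_1)\beta h}\big]$. The dual function $v$ on $\{y\ge(1-\lambda)e^{(\lambda-1)\beta h}\}$ is $v(y,h)=C_2(h)y^{r_2}-\frac{1}{r\beta}e^{\lambda\beta h}$ if $y\ge e^{\lambda\beta h}$; $v(y,h)=C_3(h)y^{r_1}+C_4(h)y^{r_2}-\frac{y}{r\beta}+\frac{y}{r\beta}(\ln y-\lambda\beta h+\frac{\kappa^2}{2r})$ if $e^{(\lambda-1)\beta h}<y<e^{\lambda\beta h}$; $v(y,h)=C_5(h)y^{r_1}+C_6(h)y^{r_2}-\frac1rhy-\frac{1}{r\beta}e^{(\lambda-1)\beta h}$ if $(1-\lambda)e^{(\lambda-1)\beta h}\le y\le e^{(\lambda-1)\beta h}$. The feedback portfolio function is $\pi^\dagger(y,h)=\frac{\mu-r}{\sigma^2}\cdot\frac{2r}{\kappa^2}C_2(h)y^{r_2-1}$ if $y\ge e^{\lambda\beta h}$; $\frac{\mu-r}{\sigma^2}\big[\frac{2r}{\kappa^2}C_3(h)y^{r_1-1}+\frac{2r}{\kappa^2}C_4(h)y^{r_2-1}+\frac1{r\beta}\big]$ if $e^{(\lambda-1)\beta h}<y<e^{\lambda\beta h}$; $\frac{\mu-r}{\sigma^2}\big[\frac{2r}{\kappa^2}C_5(h)y^{r_1-1}+\frac{2r}{\kappa^2}C_6(h)y^{r_2-1}\big]$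 if $(1-\lambda)e^{(\lambda-1)\beta h}\le y\le e^{(\lambda-1)\beta h}$ (note $\pi^\dagger=\frac{\mu-r}{\sigma^2}yv_{yy}$). *)

From Stdlib Require Import Reals Lra.
From Coquelicot Require Import Coquelicot.
Open Scope R_scope.

Definition kappa (r mu sigma : R) : R := (mu - r) / sigma.

Definition r1 (r mu sigma : R) : R :=
  (1 + sqrt (1 + 8 * r / (kappa r mu sigma ^ 2))) / 2.
Definition r2 (r mu sigma : R) : R :=
  (1 - sqrt (1 + 8 * r / (kappa r mu sigma ^ 2))) / 2.

Definition pw (y p : R) : R := Rpower y p.

Section Consts.
Variables r mu sigma beta lam : R.
Let k := kappa r mu sigma.
Let a := r1 r mu sigma.
Let b := r2 r mu sigma.

Definition C6 (h : R) : R :=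
  pw (1 - lam) (a - b) / ((a - b) * beta * r) *
  (1 / (1 - b) * exp ((lam - 1) * (1 - b) * beta * h)
   - lam / (lam * (1 - b) - (a - b)) * exp ((lam * (1 - b) - (a - b)) * beta * h)).

Definition C4 (h : R) : R :=
  C6 h + (1 - a) * k ^ 2 / (2 * (a - b) * beta * r ^ 2)
         * exp ((lam - 1) * (1 - b) * beta * h).

Definition C2 (h : R) : R :=
  C6 h + (1 - a) * k ^ 2 / (2 * (a - b) * beta * r ^ 2)
         * (exp ((lam - 1) * (1 - b) * beta * h) - exp (lam * (1 - b) * beta * h)).

Definition C3 (h : R) : R :=
  (b - 1) * k ^ 2 / (2 * (a - b) * beta * r ^ 2) * exp (lam * (1 - a) * beta * h).

Definition C5 (h : R) : R :=
  (1 - b) * k ^ 2 / (2 * (a - b) * beta * r ^ 2)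
  * (exp ((lam - 1) * (1 - a) * beta * h) - exp (lam * (1 - a) * beta * h)).

Definition v_hi (y h : R) : R :=
  C2 h * pw y b - 1 / (r * beta) * exp (lam * beta * h).

Definition v_mid (y h : R) : R :=
  C3 h * pw y a + C4 h * pw y b - y / (r * beta)
  + y / (r * beta) * (ln y - lam * beta * h + k ^ 2 / (2 * r)).

Definition v_lo (y h : R) : R :=
  C5 h * pw y a + C6 h * pw y b - 1 / r * h * y
  - 1 / (r * beta) * exp ((lam - 1) * beta * h).

Definition yhi (h : R) : R := exp (lam * beta * h).
Definition ylo (h : R) : R := exp ((lam - 1) * beta * h).
Definition ymin (h : R) : R := (1 - lam) * exp ((lam - 1) * beta * h).

Definition v (y h : R) : R :=
  if Rle_dec (yhi h) y then v_hi y h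
  else if Rlt_dec (ylo h) y then v_mid y h
  else v_lo y h.

Definition pi_dagger (y h : R) : R :=
  if Rle_dec (yhi h) y then
    (mu - r) / sigma ^ 2 * (2 * r / k ^ 2 * C2 h * pw y (b - 1))
  else if Rlt_dec (ylo h) y then
    (mu - r) / sigma ^ 2 *
      (2 * r / k ^ 2 * C3 h * pw y (a - 1) + 2 * r / k ^ 2 * C4 h * pw y (b - 1)
       + 1 / (r * beta))
  else
    (mu - r) / sigma ^ 2 *
      (2 * r / k ^ 2 * C5 h * pw y (a - 1) + 2 * r / k ^ 2 * C6 h * pw y (b - 1)).

End Consts.

From Pilot Require Import Defs.
From Stdlib Require Import Reals Lra.
From Coquelicot Require Import Coquelicot.
Open Scope R_scope.

(* The key observation is the identity  y * v_yy(y, h) = M(y, h)  on each of the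
   three regions, where M is the bracket appearing in the definition of
   pi_dagger, so that pi_dagger = (mu - r)/sigma^2 * M. *)

Lemma Derive_2_on_open (U : R -> Prop) (f f1 f2 : R -> R) (y : R) :
  open U ->
  (forall z, U z -> is_derive f z (f1 z)) ->
  (forall z, U z -> is_derive f1 z (f2 z)) -> U y ->
  ex_derive_n f 2 y /\ Derive_n f 2 y = f2 y.
Proof.
  intros hU H1 H2 hy.
  assert (Hloc : locally y (fun z => f1 z = Derive f z)).
  { apply (filter_imp U); [|exact (hU y hy)].
    intros z hz. symmetry. apply is_derive_unique. auto. }
  assert (H : is_derive (Derive f) y (f2 y)) by (apply is_derive_ext_loc with f1; auto).
  split; simpl; [exists (f2 y)|apply is_derive_unique]; exact H.
Qed.

Lemma second_derivative_pos (f df M : R -> R) (y : R) :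
  (forall z, 0 < z -> is_derive f z (df z)) ->
  (forall z, 0 < z -> is_derive df z (M z / z)) ->
  0 < y -> 0 < M y -> ex_derive_n f 2 y /\ 0 < Derive_n f 2 y.
Proof.
  intros H1 H2 hy hM.
  destruct (Derive_2_on_open (fun z => 0 < z) f df (fun z => M z / z) y
              (open_gt 0) H1 H2 hy) as [E1 E2].
  split; [exact E1|]. rewrite E2. apply Rdiv_lt_0_compat; assumption.
Qed.

Lemma ex_derive_bounded_below (f : R -> R) (lo hi : R) :
  lo <= hi -> (forall z, lo <= z <= hi -> ex_derive f z) ->
  exists m, forall y, lo <= y <= hi -> m <= f y.
Proof.
  intros hlh hf.
  destruct (continuity_ab_min f lo hi hlh) as [ym [Hmin _]].
  - intros c hc. apply continuity_pt_filterlim.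
    apply (ex_derive_continuous f). exact (hf c hc).
  - exists (f ym). exact Hmin.
Qed.

Lemma pw_pred (y p : R) : 0 < y -> pw y (p - 1) = pw y p / y.
Proof.
  intros hy. unfold pw, Rminus.
  rewrite Rpower_plus, Rpower_Ropp, Rpower_1 by exact hy. reflexivity.
Qed.

Lemma pw_pos (y p : R) : 0 < pw y p.
Proof. apply exp_pos. Qed.

Section CharacteristicRoots.
Variables r mu sigma : R.
Hypotheses (hr : 0 < r) (hmu : r < mu) (hsig : 0 < sigma).

Local Notation k := (kappa r mu sigma).
Local Notation a := (r1 r mu sigma).
Local Notation b := (r2 r mu sigma).

Lemma kappa_pos : 0 < k.
Proof. unfold kappa. apply Rdiv_lt_0_compat; lra. Qed.

Lemma kappa_sq_pos : 0 < k ^ 2.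
Proof. apply pow_lt, kappa_pos. Qed.

Lemma char_roots :
  1 < a /\ b < 0 /\ a + b = 1 /\
  a * (a - 1) = 2 * r / k ^ 2 /\ b * (b - 1) = 2 * r / k ^ 2.
Proof.
  pose proof kappa_sq_pos as hk.
  assert (hq : 0 < 8 * r / k ^ 2) by (apply Rdiv_lt_0_compat; lra).
  assert (hq' : 2 * r / k ^ 2 = 8 * r / k ^ 2 / 4)
    by (field; apply Rgt_not_eq, kappa_pos).
  assert (hsq := sqrt_sqrt (1 + 8 * r / k ^ 2) ltac:(lra)).
  assert (hs1 : 1 < sqrt (1 + 8 * r / k ^ 2)).
  { rewrite <- sqrt_1 at 1. apply sqrt_lt_1; lra. }
  unfold r1, r2. rewrite hq'.
  set (s := sqrt (1 + 8 * r / k ^ 2)) in *. set (q := 8 * r / k ^ 2) in *.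
  repeat split; try lra; nra.
Qed.

End CharacteristicRoots.

Section DualFunction.
Variables r mu sigma beta lam : R.
Hypotheses (hr : 0 < r) (hmu : r < mu) (hsig : 0 < sigma) (hbeta : 0 < beta)
  (hlam0 : 0 < lam) (hlam1 : lam < 1).

Local Notation k := (kappa r mu sigma).
Local Notation a := (r1 r mu sigma).
Local Notation b := (r2 r mu sigma).
Local Notation C2 := (C2 r mu sigma beta lam).
Local Notation C3 := (C3 r mu sigma beta lam).
Local Notation C4 := (C4 r mu sigma beta lam).
Local Notation C5 := (C5 r mu sigma beta lam).
Local Notation C6 := (C6 r mu sigma beta lam).

Lemma scale_pos : 0 < k ^ 2 / (2 * (a - b) * beta * r ^ 2).
Proof.
  destruct (char_roots r mu sigma hr hmu hsig) as (ha & hb & _).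
  pose proof (kappa_sq_pos r mu sigma hmu hsig).
  apply Rdiv_lt_0_compat; [lra|].
  apply Rmult_lt_0_compat; [|apply pow_lt; lra].
  apply Rmult_lt_0_compat; lra.
Qed.

Lemma C6_pos (h : R) : 0 < h -> 0 < C6 h.
Proof.
  intros hh. destruct (char_roots r mu sigma hr hmu hsig) as (ha & hb & _).
  unfold Defs.C6.
  apply Rmult_lt_0_compat.
  - apply Rdiv_lt_0_compat; [apply pw_pos|].
    apply Rmult_lt_0_compat; [apply Rmult_lt_0_compat|]; lra.
  - (* the exponent lam (1 - r2) - (r1 - r2) is negative, so both terms add up *)
    assert (hd : lam * (1 - b) - (a - b) < 0) by nra.
    assert (0 < 1 / (1 - b) * exp ((lam - 1) * (1 - b) * beta * h)).
    { apply Rmult_lt_0_compat; [apply Rdiv_lt_0_compat; lra|apply exp_pos]. }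
    assert (0 < lam / - (lam * (1 - b) - (a - b))
                * exp ((lam * (1 - b) - (a - b)) * beta * h)).
    { apply Rmult_lt_0_compat; [apply Rdiv_lt_0_compat; lra|apply exp_pos]. }
    replace (lam / (lam * (1 - b) - (a - b)))
      with (- (lam / - (lam * (1 - b) - (a - b)))) by (field; lra).
    lra.
Qed.

Lemma C5_pos (h : R) : 0 < h -> 0 < C5 h.
Proof.
  intros hh. destruct (char_roots r mu sigma hr hmu hsig) as (ha & hb & hab & _).
  pose proof scale_pos as hQ.
  unfold Defs.C5.
  replace ((1 - b) * k ^ 2 / (2 * (a - b) * beta * r ^ 2))
    with ((1 - b) * (k ^ 2 / (2 * (a - b) * beta * r ^ 2)))
    by (field; repeat split; lra).
  assert (0 < beta * h) by (apply Rmult_lt_0_compat; lra).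
  assert (exp (lam * (1 - a) * beta * h) < exp ((lam - 1) * (1 - a) * beta * h))
    by (apply exp_increasing; nra).
  apply Rmult_lt_0_compat; [apply Rmult_lt_0_compat|]; lra.
Qed.

Lemma C2_pos (h : R) : 0 < h -> 0 < C2 h.
Proof.
  intros hh. pose proof (C6_pos h hh).
  destruct (char_roots r mu sigma hr hmu hsig) as (ha & hb & _).
  pose proof scale_pos as hQ.
  assert (he : exp ((lam - 1) * (1 - b) * beta * h) < exp (lam * (1 - b) * beta * h)).
  { apply exp_increasing.
    assert (0 < (1 - b) * beta * h)
      by (apply Rmult_lt_0_compat; [apply Rmult_lt_0_compat|]; lra).
    nra. }
  (* C2 = C6 + (r1 - 1) * scale * (positive difference of exponentials) *)
  assert (0 < (a - 1) * (k ^ 2 / (2 * (a - b) * beta * r ^ 2))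
              * (exp (lam * (1 - b) * beta * h) - exp ((lam - 1) * (1 - b) * beta * h))).
  { apply Rmult_lt_0_compat; [apply Rmult_lt_0_compat|]; lra. }
  unfold Defs.C2.
  replace ((1 - a) * k ^ 2 / (2 * (a - b) * beta * r ^ 2)
           * (exp ((lam - 1) * (1 - b) * beta * h) - exp (lam * (1 - b) * beta * h)))
    with ((a - 1) * (k ^ 2 / (2 * (a - b) * beta * r ^ 2))
          * (exp (lam * (1 - b) * beta * h) - exp ((lam - 1) * (1 - b) * beta * h)))
    by (field; repeat split; lra).
  lra.
Qed.

(* The brackets M of pi_dagger on the three regions; y * v_yy = M there. *)
Definition curv_hi (h y : R) : R := 2 * r / k ^ 2 * C2 h * pw y (b - 1).
Definition curv_mid (h y : R) : R :=
  2 * r / k ^ 2 * C3 h * pw y (a - 1) + 2 * r / k ^ 2 * C4 h * pw y (b - 1)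
  + 1 / (r * beta).
Definition curv_lo (h y : R) : R :=
  2 * r / k ^ 2 * C5 h * pw y (a - 1) + 2 * r / k ^ 2 * C6 h * pw y (b - 1).

Lemma curv_hi_pos (h y : R) : 0 < h -> 0 < curv_hi h y.
Proof.
  intros hh. pose proof (kappa_sq_pos r mu sigma hmu hsig).
  assert (0 < 2 * r / k ^ 2) by (apply Rdiv_lt_0_compat; lra).
  unfold curv_hi.
  apply Rmult_lt_0_compat; [apply Rmult_lt_0_compat|]; auto using C2_pos, pw_pos.
Qed.

Lemma curv_lo_pos (h y : R) : 0 < h -> 0 < curv_lo h y.
Proof.
  intros hh. pose proof (kappa_sq_pos r mu sigma hmu hsig).
  assert (0 < 2 * r / k ^ 2) by (apply Rdiv_lt_0_compat; lra).
  unfold curv_lo.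
  apply Rplus_lt_0_compat; (apply Rmult_lt_0_compat; [apply Rmult_lt_0_compat|]);
    auto using C5_pos, C6_pos, pw_pos.
Qed.

Lemma curv_mid_decomposition (h y : R) : 0 < y ->
  curv_mid h y =
    (a * (1 - exp ((a - 1) * (ln y - lam * beta * h)))
     - b * (1 - exp ((b - 1) * (ln y - (lam - 1) * beta * h)))) / ((a - b) * beta * r)
    + 2 * r / k ^ 2 * C6 h * pw y (b - 1).
Proof.
  intros hy.
  destruct (char_roots r mu sigma hr hmu hsig) as (ha & hb & hab & _).
  pose proof (kappa_sq_pos r mu sigma hmu hsig).
  assert (eX : exp ((a - 1) * (ln y - lam * beta * h))
               = exp (lam * (1 - a) * beta * h) * exp ((a - 1) * ln y))
    by (rewrite <- exp_plus; f_equal; ring).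
  assert (eY : exp ((b - 1) * (ln y - (lam - 1) * beta * h))
               = exp ((lam - 1) * (1 - b) * beta * h) * exp ((b - 1) * ln y))
    by (rewrite <- exp_plus; f_equal; ring).
  rewrite eX, eY.
  unfold curv_mid, Defs.C3, Defs.C4, pw, Rpower.
  replace b with (1 - a) by lra.
  field. pose proof (kappa_pos r mu sigma hmu hsig). repeat split; lra.
Qed.

Lemma curv_mid_pos (h y : R) : 0 < h -> ylo beta lam h < y < yhi beta lam h ->
  0 < curv_mid h y.
Proof.
  intros hh [hy1 hy2]. unfold ylo, yhi in *.
  destruct (char_roots r mu sigma hr hmu hsig) as (ha & hb & _).
  pose proof (kappa_sq_pos r mu sigma hmu hsig).
  assert (hy0 : 0 < y) by (pose proof (exp_pos ((lam - 1) * beta * h)); lra).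
  assert (hL1 : (lam - 1) * beta * h < ln y)
    by (rewrite <- (ln_exp ((lam - 1) * beta * h)); apply ln_increasing; [apply exp_pos|lra]).
  assert (hL2 : ln y < lam * beta * h)
    by (rewrite <- (ln_exp (lam * beta * h)); apply ln_increasing; lra).
  assert (exp_lt_1 : forall t, t < 0 -> exp t < 1)
    by (intros t ht; rewrite <- exp_0; apply exp_increasing, ht).
  assert (hX : exp ((a - 1) * (ln y - lam * beta * h)) < 1) by (apply exp_lt_1; nra).
  assert (hY : exp ((b - 1) * (ln y - (lam - 1) * beta * h)) < 1) by (apply exp_lt_1; nra).
  rewrite curv_mid_decomposition by exact hy0.
  apply Rplus_lt_0_compat.
  - apply Rdiv_lt_0_compat; [nra|].
    apply Rmult_lt_0_compat; [apply Rmult_lt_0_compat|]; lra.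
  - assert (0 < 2 * r / k ^ 2) by (apply Rdiv_lt_0_compat; lra).
    apply Rmult_lt_0_compat; [apply Rmult_lt_0_compat|]; auto using C6_pos, pw_pos.
Qed.

Definition dv_hi (h y : R) : R := C2 h * b * pw y (b - 1).
Definition dv_mid (h y : R) : R :=
  C3 h * a * pw y (a - 1) + C4 h * b * pw y (b - 1)
  + (ln y - lam * beta * h + k ^ 2 / (2 * r)) / (r * beta).
Definition dv_lo (h y : R) : R :=
  C5 h * a * pw y (a - 1) + C6 h * b * pw y (b - 1) - 1 / r * h.

Lemma is_derive_v_hi (h z : R) : 0 < z ->
  is_derive (fun y => v_hi r mu sigma beta lam y h) z (dv_hi h z).
Proof.
  intros hz. unfold dv_hi. rewrite pw_pred by exact hz.
  unfold v_hi, pw, Rpower. auto_derive; [lra|field; lra].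
Qed.

Lemma is_derive_v_mid (h z : R) : 0 < z ->
  is_derive (fun y => v_mid r mu sigma beta lam y h) z (dv_mid h z).
Proof.
  intros hz. unfold dv_mid. rewrite !pw_pred by exact hz.
  unfold v_mid, pw, Rpower. auto_derive; [lra|field; lra].
Qed.

Lemma is_derive_v_lo (h z : R) : 0 < z ->
  is_derive (fun y => v_lo r mu sigma beta lam y h) z (dv_lo h z).
Proof.
  intros hz. unfold dv_lo. rewrite !pw_pred by exact hz.
  unfold v_lo, pw, Rpower. auto_derive; [lra|field; lra].
Qed.

(* Second derivatives: y v_yy = M, using r1 (r1 - 1) = r2 (r2 - 1) = 2r/kappa^2. *)
Lemma is_derive_dv_hi (h z : R) : 0 < z -> is_derive (dv_hi h) z (curv_hi h z / z).
Proof.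
  intros hz. destruct (char_roots r mu sigma hr hmu hsig) as (_ & _ & _ & _ & hB).
  unfold dv_hi, curv_hi. rewrite <- hB.
  unfold pw, Rpower. auto_derive; [lra|field; lra].
Qed.

Lemma is_derive_dv_mid (h z : R) : 0 < z -> is_derive (dv_mid h) z (curv_mid h z / z).
Proof.
  intros hz. destruct (char_roots r mu sigma hr hmu hsig) as (_ & _ & _ & hA & hB).
  unfold dv_mid, curv_mid.
  replace (2 * r / k ^ 2 * C3 h) with (a * (a - 1) * C3 h) by (rewrite hA; ring).
  replace (2 * r / k ^ 2 * C4 h) with (b * (b - 1) * C4 h) by (rewrite hB; ring).
  unfold pw, Rpower. auto_derive; [lra|field; split; lra].
Qed.

Lemma is_derive_dv_lo (h z : R) : 0 < z -> is_derive (dv_lo h) z (curv_lo h z / z).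
Proof.
  intros hz. destruct (char_roots r mu sigma hr hmu hsig) as (_ & _ & _ & hA & hB).
  unfold dv_lo, curv_lo.
  replace (2 * r / k ^ 2 * C5 h) with (a * (a - 1) * C5 h) by (rewrite hA; ring).
  replace (2 * r / k ^ 2 * C6 h) with (b * (b - 1) * C6 h) by (rewrite hB; ring).
  unfold pw, Rpower. auto_derive; [lra|field; lra].
Qed.

Lemma v_bounded_below (h : R) : 0 < h ->
  exists m, forall y, ymin beta lam h <= y -> m <= v r mu sigma beta lam y h.
Proof.
  intros hh.
  assert (hmin : 0 < ymin beta lam h)
    by (unfold ymin; apply Rmult_lt_0_compat; [lra|apply exp_pos]).
  assert (hml : ymin beta lam h <= ylo beta lam h).
  { unfold ymin, ylo. pose proof (exp_pos ((lam - 1) * beta * h)). nra. }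
  assert (hlh : ylo beta lam h <= yhi beta lam h)
    by (unfold ylo, yhi; apply Rlt_le, exp_increasing; nra).
  destruct (ex_derive_bounded_below (fun z => v_mid r mu sigma beta lam z h)
              (ylo beta lam h) (yhi beta lam h) hlh) as [m1 Hm1].
  { intros z hz. eexists. apply is_derive_v_mid. lra. }
  destruct (ex_derive_bounded_below (fun z => v_lo r mu sigma beta lam z h)
              (ymin beta lam h) (ylo beta lam h) hml) as [m2 Hm2].
  { intros z hz. eexists. apply is_derive_v_lo. lra. }
  (* on the upper region v_hi = C2 y^r2 - const >= - const *)
  exists (Rmin (Rmin m1 m2) (- (1 / (r * beta) * exp (lam * beta * h)))).
  intros y hy.
  pose proof (Rmin_l (Rmin m1 m2) (- (1 / (r * beta) * exp (lam * beta * h)))).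
  pose proof (Rmin_r (Rmin m1 m2) (- (1 / (r * beta) * exp (lam * beta * h)))).
  pose proof (Rmin_l m1 m2). pose proof (Rmin_r m1 m2).
  unfold v. destruct (Rle_dec (yhi beta lam h) y) as [G1|G1].
  - unfold v_hi.
    pose proof (Rmult_lt_0_compat _ _ (C2_pos h hh) (pw_pos y b)). lra.
  - destruct (Rlt_dec (ylo beta lam h) y) as [G2|G2].
    + pose proof (Hm1 y ltac:(lra)). lra.
    + pose proof (Hm2 y ltac:(lra)). lra.
Qed.

End DualFunction.

Theorem lemma3p1 (r mu sigma beta lam : R)
  (hr : 0 < r) (hmu : r < mu) (hsig : 0 < sigma) (hbeta : 0 < beta)
  (hlam0 : 0 < lam) (hlam1 : lam < 1) :
  forall h : R, 0 < h ->
  (* v_yy > 0 on each region, using the corresponding piece *)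
  (forall y, yhi beta lam h <= y ->
     ex_derive_n (fun z => v_hi r mu sigma beta lam z h) 2 y /\
     0 < Derive_n (fun z => v_hi r mu sigma beta lam z h) 2 y) /\
  (forall y, ylo beta lam h < y < yhi beta lam h ->
     ex_derive_n (fun z => v_mid r mu sigma beta lam z h) 2 y /\
     0 < Derive_n (fun z => v_mid r mu sigma beta lam z h) 2 y) /\
  (forall y, ymin beta lam h <= y <= ylo beta lam h ->
     ex_derive_n (fun z => v_lo r mu sigma beta lam z h) 2 y /\
     0 < Derive_n (fun z => v_lo r mu sigma beta lam z h) 2 y) /\
  (* the inverse Legendre transform inf_{y >= ymin} [v(y,h) + x y] is finite *)
  (forall x, 0 < x -> exists m : R,
     forall y, ymin beta lam h <= y -> m <= v r mu sigma beta lam y h + x * y) /\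
  (* pi_dagger is strictly positive on the whole domain *)
  (forall y, ymin beta lam h <= y -> 0 < pi_dagger r mu sigma beta lam y h).
Proof.
  intros h hh.
  assert (hmin : 0 < ymin beta lam h)
    by (unfold ymin; apply Rmult_lt_0_compat; [lra|apply exp_pos]).
  assert (hyhi : 0 < yhi beta lam h) by apply exp_pos.
  assert (hylo : 0 < ylo beta lam h) by apply exp_pos.
  assert (hc : 0 < (mu - r) / sigma ^ 2)
    by (apply Rdiv_lt_0_compat; [lra|apply pow_lt; lra]).
  split; [|split; [|split; [|split]]].
  - intros y hy. apply (second_derivative_pos _ (dv_hi r mu sigma beta lam h)
                          (curv_hi r mu sigma beta lam h));
      auto using is_derive_v_hi, is_derive_dv_hi, curv_hi_pos; lra.
  - intros y hy. apply (second_derivative_pos _ (dv_mid r mu sigma beta lam h)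
                          (curv_mid r mu sigma beta lam h));
      auto using is_derive_v_mid, is_derive_dv_mid, curv_mid_pos; lra.
  - intros y hy. apply (second_derivative_pos _ (dv_lo r mu sigma beta lam h)
                          (curv_lo r mu sigma beta lam h));
      auto using is_derive_v_lo, is_derive_dv_lo, curv_lo_pos; lra.
  - intros x hx. destruct (v_bounded_below r mu sigma beta lam hr hmu hsig hbeta
                            hlam0 hlam1 h hh) as [m Hm].
    exists m. intros y hy. pose proof (Hm y hy).
    assert (0 < x * y) by (apply Rmult_lt_0_compat; lra). lra.
  -
    intros y hy. unfold pi_dagger.
    destruct (Rle_dec (yhi beta lam h) y); [|destruct (Rlt_dec (ylo beta lam h) y)];
      apply Rmult_lt_0_compat; try exact hc.
    + exact (curv_hi_pos r mu sigma beta lam hr hmu hsig hbeta hlam0 hlam1 h y hh).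
    + exact (curv_mid_pos r mu sigma beta lam hr hmu hsig hbeta hlam0 hlam1 h y hh
               ltac:(lra)).
    + exact (curv_lo_pos r mu sigma beta lam hr hmu hsig hbeta hlam0 hlam1 h y hh).
Qed.
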